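(* Let $\theta\in\mathbb{R}^n$ be a vector with each entry $\theta_i\in\{0,1\}$, $i=1,\dots,n$. Let $\Theta=\mathrm{Diag}(\theta)$ and $\Sigma=I_n-\Theta$. Then for any matrix $H\in\mathbb{R}^{m\times n}$, \[ I_n-[\Theta\ H^T]\left(\begin{bmatrix}\Theta\\ H\end{bmatrix}[\Theta\ H^T]\right)^{\dagger}\begin{bmatrix}\Theta\\ H\end{bmatrix}=\Sigma-\Sigma H^T(H\Sigma H^T)^{\dagger}H\Sigma . \]
   Context: $\mathrm{Diag}(y)$ is the diagonal matrix with diagonal $y$; $I_n$ is the $n\times n$ identity; $N^\dagger$ is the Moore–Penrose pseudo-inverse of $N$. *)

From HB Require Import structures.
From mathcomp Require Import all_boot all_order all_algebra.
From Stdlib Require Import ClassicalEpsilon.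
Set Implicit Arguments. Unset Strict Implicit. Unset Printing Implicit Defensive.
Import Order.TTheory GRing.Theory Num.Theory.
Local Open Scope ring_scope.

(* The four Penrose conditions: X is the Moore-Penrose pseudo-inverse of A
   (real matrices, so the adjoint is the transpose). *)
Definition penrose (R : realFieldType) (p q : nat)
    (A : 'M[R]_(p, q)) (X : 'M[R]_(q, p)) : Prop :=
  [/\ A *m X *m A = A,
      X *m A *m X = X,
      (A *m X)^T = A *m X &
      (X *m A)^T = X *m A].

(* Moore-Penrose pseudo-inverse: the (unique, always existing) matrix
   satisfying the Penrose conditions, selected by Hilbert's epsilon. *)
Definition mp_pinv (R : realFieldType) (p q : nat) (A : 'M[R]_(p, q)) : 'M[R]_(q, p) :=
  epsilon (inhabits 0) (fun X => penrose A X).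

From HB Require Import structures.
From mathcomp Require Import all_boot all_order all_algebra.
From Stdlib Require Import ClassicalEpsilon.
Import Order.TTheory GRing.Theory Num.Theory.
Local Open Scope ring_scope.
Local Set Implicit Arguments.

(* A^T (A A^T)^+ A is the orthogonal projector onto the row space of A, and it
   is characterised by two properties: its rows lie in the row space of A and
   it fixes A^T.  For M = [Theta; H] with Theta a symmetric idempotent, the row
   space of M splits orthogonally into the range of Theta and the row space of
   H Sigma, so the projector for M is Theta plus the projector for H Sigma;
   subtracting from the identity gives the claim. *)

Section RowProjector.
Context {R : realFieldType}.
Implicit Types p q : nat.

Lemma trmx_mul_self_eq0 p q (E : 'M[R]_(p, q)) : E^T *m E = 0 -> E = 0.
Proof.
move=> EtE0; apply/matrixP => i j.
have := congr1 (fun M : 'M[R]_q => M j j) EtE0; rewrite !mxE => /eqP.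
rewrite psumr_eq0; last by move=> k _; rewrite mxE -expr2 sqr_ge0.
by move=> /allP /(_ i (mem_index_enum _)); rewrite mxE -expr2 sqrf_eq0 => /eqP ->.
Qed.

Section GeneralizedInverse.
Variables (p q : nat) (A : 'M[R]_(p, q)).

Lemma ginv_trmx (G : 'M[R]_p) :
  A *m A^T *m G *m (A *m A^T) = A *m A^T ->
  A *m A^T *m G^T *m (A *m A^T) = A *m A^T.
Proof. by move=> /(congr1 trmx); rewrite !trmx_mul !trmxK !mulmxA. Qed.

Lemma ginv_cancel_l (G : 'M[R]_p) :
  A *m A^T *m G *m (A *m A^T) = A *m A^T -> A^T *m G *m (A *m A^T) = A^T.
Proof.
move=> gG; set E := A^T *m (G *m (A *m A^T) - 1%:M).
have AE0 : A *m E = 0.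
  by rewrite mulmxA mulmxBr mulmx1 !mulmxA -(mulmxA _ A A^T) gG subrr.
have EtE0 : E^T *m E = 0 by rewrite {1}/E trmx_mul trmxK -mulmxA AE0 mulmx0.
move/trmx_mul_self_eq0/eqP: EtE0.
by rewrite /E mulmxBr mulmx1 (mulmxA A^T) subr_eq0 => /eqP.
Qed.

Lemma ginv_cancel_r (G : 'M[R]_p) :
  A *m A^T *m G *m (A *m A^T) = A *m A^T -> A *m A^T *m G *m A = A.
Proof.
by move=> /ginv_trmx /ginv_cancel_l /(congr1 trmx); rewrite !trmx_mul !trmxK !mulmxA.
Qed.

(* With Q := A^T G A: P Q = P because A Q = A, and P Q = Q because P fixes A^T. *)
Lemma ginv_proj_unique (G : 'M[R]_p) (P : 'M[R]_q) (Z : 'M[R]_(q, p)) :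
  A *m A^T *m G *m (A *m A^T) = A *m A^T ->
  P = Z *m A -> P *m A^T = A^T -> P = A^T *m G *m A.
Proof.
move=> gG PZA PAt.
have PQ_P : P *m (A^T *m G *m A) = P.
  by rewrite {1}PZA !mulmxA -!(mulmxA Z) ginv_cancel_r.
by rewrite -{1}PQ_P !mulmxA PAt.
Qed.

Lemma ginv_proj_sym (G : 'M[R]_p) :
  A *m A^T *m G *m (A *m A^T) = A *m A^T ->
  (A^T *m G *m A)^T = A^T *m G *m A.
Proof.
move=> gG; rewrite !trmx_mul trmxK mulmxA.
apply: (ginv_proj_unique (Z := A^T *m G^T)) => //.
by rewrite -(mulmxA _ A A^T) ginv_cancel_l ?ginv_trmx.
Qed.

End GeneralizedInverse.

(* X = A^T G1 A G2 A^T, where G1, G2 are generalized inverses of A A^T and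
   A^T A: A X and X A are then the symmetric projectors A G2 A^T and A^T G1 A. *)
Lemma penrose_exists p q (A : 'M[R]_(p, q)) : exists X, penrose A X.
Proof.
set G1 := pinvmx (A *m A^T); set G2 := pinvmx (A^T *m A).
have gG1 : A *m A^T *m G1 *m (A *m A^T) = A *m A^T by rewrite mulmxKpV.
have gG2 : A^T *m A^T^T *m G2 *m (A^T *m A^T^T) = A^T *m A^T^T.
  by rewrite trmxK mulmxKpV.
clearbody G1 G2.
have AG1 := ginv_cancel_l gG1; have AG1r := ginv_cancel_r gG1.
have := ginv_cancel_l gG2; rewrite trmxK => AG2.
have sym1 := ginv_proj_sym gG1.
have := ginv_proj_sym gG2; rewrite trmxK => sym2.
exists (A^T *m G1 *m A *m G2 *m A^T).
have XA : A^T *m G1 *m A *m G2 *m A^T *m A = A^T *m G1 *m A.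
  by rewrite -!mulmxA (mulmxA A G2) AG2.
have AX : A *m (A^T *m G1 *m A *m G2 *m A^T) = A *m G2 *m A^T.
  by rewrite !mulmxA AG1r.
have AG2A : A *m G2 *m A^T *m A = A by rewrite -(mulmxA _ A^T A) AG2.
split.
- by rewrite AX AG2A.
- by rewrite XA !mulmxA -(mulmxA (A^T *m G1) A A^T) AG1.
- by rewrite AX sym2.
- by rewrite XA sym1.
Qed.

Lemma mp_pinvP p q (A : 'M[R]_(p, q)) : penrose A (mp_pinv A).
Proof. by have [X AX] := penrose_exists A; apply: epsilon_spec; exists X. Qed.

Definition row_proj p q (A : 'M[R]_(p, q)) : 'M[R]_q :=
  A^T *m mp_pinv (A *m A^T) *m A.

Lemma row_proj_unique p q (A : 'M[R]_(p, q)) (P : 'M[R]_q) (Z : 'M[R]_(q, p)) :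
  P = Z *m A -> P *m A^T = A^T -> P = row_proj A.
Proof. by have [gA _ _ _] := mp_pinvP (A *m A^T); apply: ginv_proj_unique. Qed.

Lemma row_proj_ginv_cancel p q (A : 'M[R]_(p, q)) :
  A^T *m mp_pinv (A *m A^T) *m (A *m A^T) = A^T.
Proof. by have [gA _ _ _] := mp_pinvP (A *m A^T); apply: ginv_cancel_l. Qed.

Section SymmetricIdempotent.
Variables (m n : nat) (T : 'M[R]_n) (H : 'M[R]_(m, n)).
Hypotheses (T_sym : T^T = T) (T_idem : T *m T = T).

Let S := 1%:M - T.

Let S_sym : S^T = S. Proof. by rewrite /S linearB /= trmx1 T_sym. Qed.
Let TS0 : T *m S = 0. Proof. by rewrite /S mulmxBr mulmx1 T_idem subrr. Qed.
Let ST0 : S *m T = 0. Proof. by rewrite /S mulmxBl mul1mx T_idem subrr. Qed.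
Let S_idem : S *m S = S. Proof. by rewrite {1}/S mulmxBl mul1mx TS0 subr0. Qed.

Lemma row_proj_mul_idem :
  row_proj (H *m S) = S *m H^T *m mp_pinv (H *m S *m H^T) *m H *m S.
Proof.
by rewrite /row_proj trmx_mul S_sym -(mulmxA H S) (mulmxA S) S_idem !mulmxA.
Qed.

Lemma row_proj_col_mx : row_proj (col_mx T H) = T + row_proj (H *m S).
Proof.
set N := H *m S; set X := mp_pinv (N *m N^T).
have Nt : N^T = S *m H^T by rewrite trmx_mul S_sym.
have NT0 : N *m T = 0 by rewrite -mulmxA ST0 mulmx0.
have NHT : N = H - H *m T by rewrite /N /S mulmxBr mulmx1.
have NHt : N *m H^T = N *m N^T by rewrite Nt -!mulmxA (mulmxA S) S_idem.
symmetry; apply: (row_proj_unique (Z := row_mx (1%:M - N^T *m X *m H) (N^T *m X))).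
- rewrite mul_row_col mulmxBl mul1mx -addrA /row_proj -/X; congr (T + _).
  by rewrite {2}NHT mulmxBr !mulmxA addrC.
- rewrite tr_col_mx T_sym mul_mx_row; congr row_mx.
    by rewrite mulmxDl T_idem /row_proj -mulmxA NT0 mulmx0 addr0.
  rewrite mulmxDl /row_proj -mulmxA NHt row_proj_ginv_cancel Nt.
  by rewrite -mulmxDl /S addrC subrK mul1mx.
Qed.

End SymmetricIdempotent.

End RowProjector.

Lemma diag_mx01_idem (R : realFieldType) (n : nat) (theta : 'rV[R]_n) :
  (forall i, theta 0 i = 0 \/ theta 0 i = 1) ->
  diag_mx theta *m diag_mx theta = diag_mx theta.
Proof.
move=> theta01; apply/matrixP => i j; rewrite mul_diag_mx !mxE.
have [->|_] := eqVneq i j; last by rewrite mulr0n mulr0.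
by rewrite mulr1n; case: (theta01 j) => ->; rewrite ?mulr0 ?mulr1.
Qed.

Theorem proposition2p5 (R : realFieldType) (m n : nat) (theta : 'rV[R]_n)
  (H : 'M[R]_(m, n)) :
  (forall i, theta 0 i = 0 \/ theta 0 i = 1) ->
  let Theta := diag_mx theta in
  let Sigma := 1%:M - Theta in
  1%:M - row_mx Theta H^T *m mp_pinv (col_mx Theta H *m row_mx Theta H^T)
         *m col_mx Theta H
  = Sigma - Sigma *m H^T *m mp_pinv (H *m Sigma *m H^T) *m H *m Sigma.
Proof.
move=> theta01 Theta Sigma.
have Theta_sym : Theta^T = Theta by rewrite tr_diag_mx.
have Theta_idem : Theta *m Theta = Theta by apply: diag_mx01_idem.
have -> : row_mx Theta H^T = (col_mx Theta H)^T by rewrite tr_col_mx Theta_sym.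
rewrite -/(row_proj (col_mx Theta H)) -(row_proj_mul_idem H Theta_sym Theta_idem).
by rewrite row_proj_col_mx // opprD addrA.
Qed.
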